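(* Let $n\ge 4$ and $Q=\{0,\dots,n-1\}$. Then $\mathbf{W}_{\mathrm{sf}}(n)$ is the unique maximal semigroup of a suffix-free language in which no two states from $\{1,\dots,n-2\}$ are colliding; that is, $\mathbf{W}_{\mathrm{sf}}(n)$ is the transition semigroup of a minimal DFA (with state set $Q$, initial state $0$, empty state $n-1$) accepting a suffix-free language, no two states of $\{1,\dots,n-2\}$ collide in it, and every transition semigroup $T$ of such a DFA in which no two states of $\{1,\dots,n-2\}$ collide satisfies $T\subseteq\mathbf{W}_{\mathrm{sf}}(n)$.
   Context: A language $L$ is suffix-free if whenever $w\in L$ and $u\in L$ with $u$ a suffix of $w$, then $u=w$. Transformations act on the right ($qt$ is the image of $q$ under $t$). The transition semigroup of a DFA is the semigroup of transformations of its state set generated by the transformations induced by its letters. A minimal complete DFA of a suffix-free language with $n\ge2$ states has exactly one empty state (a state from which no final state is reachable); the states are labeled $Q=\{0,\dots,n-1\}$ with $0$ initial and $n-1$ empty. For a semigroup $T$ of transformations of $Q$, an unordered pair $\{p,q\}$ of distinct states of $Q\setminus\{0,n-1\}$ is colliding in $T$ if there exist $t\in T$ and $r\in Q\setminus\{0,n-1\}$ with $0t=p$ and $rt=q$. Define $\mathbf{B}_{\mathrm{sf}}(n)=\{t:Q\to Q \mid 0\notin Qt,\ (n-1)t=n-1,\ \text{and for all } j\ge1:\ 0t^j=n-1 \text{ or } 0t^j\neq qt^j \text{ for all } 0<q<n-1\}$ and $\mathbf{W}_{\mathrm{sf}}(n)=\{t\in\mathbf{B}_{\mathrm{sf}}(n)\mid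 0t=n-1 \text{ or } qt=n-1 \text{ for all } 1\le q\le n-2\}$. *)

(* States Q = {0,...,n-1} are the ordinals 'I_n;
   state 0 is the one with value 0, the empty state the one with value n-1. *)
From mathcomp Require Import all_boot.
Set Implicit Arguments.
Unset Strict Implicit.
Unset Printing Implicit Defensive.

Section Defs.
Variable n : nat.
Notation Q := 'I_n.
Notation trans := {ffun Q -> Q}.

Definition is_init (q : Q) : bool := val q == 0.
Definition is_empty_st (q : Q) : bool := val q == n.-1.
Definition is_mid (q : Q) : bool := (0 < val q) && (val q < n.-1).

Definition tpow (t : trans) (j : nat) (q : Q) : Q := iter j t q.

Definition Bsf (t : trans) : Prop :=
  (forall q : Q, ~~ is_init (t q)) /\
  (forall e : Q, is_empty_st e -> t e = e) /\
  (forall (j : nat) (z : Q), 1 <= j -> is_init z ->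
     is_empty_st (tpow t j z) \/
     (forall q : Q, is_mid q -> tpow t j z <> tpow t j q)).

Definition Wsf (t : trans) : Prop :=
  Bsf t /\
  (forall z : Q, is_init z ->
     is_empty_st (t z) \/ (forall q : Q, is_mid q -> is_empty_st (t q))).

Definition colliding (T : trans -> Prop) (p q : Q) : Prop :=
  [/\ is_mid p, is_mid q, p <> q &
    exists t (z r : Q), [/\ T t, is_init z, is_mid r &
      ((t z = p /\ t r = q) \/ (t z = q /\ t r = p))]].

Definition no_colliding (T : trans -> Prop) : Prop :=
  forall p q : Q, ~ colliding T p q.

Variable Sigma : finType.
Variable delta : Sigma -> trans.
Variable F : {set Q}.

Definition run (q : Q) (w : seq Sigma) : Q := foldl (fun s a => delta a s) q w.

Definition word_trans (w : seq Sigma) : trans := [ffun q => run q w].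

(* transition semigroup: transformations induced by nonempty words
   (the semigroup generated by the letter transformations) *)
Definition trans_sg (t : trans) : Prop :=
  exists w : seq Sigma, w <> [::] /\ t = word_trans w.

Definition accepts (w : seq Sigma) : Prop :=
  exists z : Q, is_init z /\ run z w \in F.

Definition suffix_free : Prop :=
  forall w u : seq Sigma, accepts w -> accepts u ->
    (exists v, w = v ++ u) -> u = w.

Definition minimal_dfa : Prop :=
  (forall q : Q, exists z w, is_init z /\ run z w = q) /\
  (forall p q : Q, p <> q -> exists w, (run p w \in F) <> (run q w \in F)).

Definition last_is_empty : Prop :=
  forall e : Q, is_empty_st e -> forall w, run e w \notin F.

Definition sf_min_dfa : Prop := [/\ minimal_dfa, suffix_free & last_is_empty].

End Defs.

(* A transformation t lies in W_sf(n) iff it avoids 0, fixes the empty state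
   n-1, and sends 0 or every middle state q (0 < q < n-1) to n-1; the
   conditions on the powers t^j in B_sf(n) then hold because n-1 is absorbing.

   In the minimal DFA of a suffix-free language no nonempty word w leads into
   0, and if 0w is not empty then 0w <> qw for q <> 0: otherwise, with u
   leading from 0 to q and x from 0w to a final state, both wx and its proper
   extension uwx would be accepted.  Hence if 0w is not empty and qw is not
   empty for a middle q, the pair {0w, qw} collides, so every collision-free
   transition semigroup lies in W_sf(n).

   Conversely W_sf(n) is closed under composition, so the DFA whose letters are
   the elements of W_sf(n), with final states {1}, has transition semigroup
   W_sf(n).  The maps sending one state x to y and all others to n-1 make it
   minimal, and the characterisation of W_sf(n) makes it suffix-free and
   collision-free. *)
From mathcomp Require Import all_boot zify.
Set Implicit Arguments.
Unset Strict Implicit.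
Unset Printing Implicit Defensive.

Section States.
Variable n : nat.
Implicit Types (p q z : 'I_n) (t : {ffun 'I_n -> 'I_n}).

Lemma init_eq p q : is_init p -> is_init q -> p = q.
Proof. by move=> /eqP hp /eqP hq; apply: val_inj; rewrite /= hp hq. Qed.

Lemma is_midE q : is_mid q = ~~ is_init q && ~~ is_empty_st q.
Proof.
rewrite /is_mid /is_init /is_empty_st; case: q => q /= hq.
by apply/andP/andP => -[] h1 h2; split; lia.
Qed.

Lemma mid_not_init q : is_mid q -> ~~ is_init q.
Proof. by rewrite is_midE => /andP[]. Qed.

Lemma mid_not_empty q : is_mid q -> ~~ is_empty_st q.
Proof. by rewrite is_midE => /andP[]. Qed.

Definition wsfb t : bool :=
  [&& [forall q, ~~ is_init (t q)],
      [forall q, is_empty_st q ==> (t q == q)] &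
      [forall z, is_init z ==>
         is_empty_st (t z) || [forall q, is_mid q ==> is_empty_st (t q)]]].

Lemma wsfbI t :
  (forall q, ~~ is_init (t q)) -> (forall q, is_empty_st q -> t q = q) ->
  (forall z q, is_init z -> is_mid q -> ~~ is_empty_st (t z) -> is_empty_st (t q)) ->
  wsfb t.
Proof.
move=> h0 he hm; apply/and3P; split; apply/forallP => q.
- exact: h0.
- by apply/implyP => /he ->.
apply/implyP => hq; case: (boolP (is_empty_st (t q))) => //= hne.
by apply/forallP => r; apply/implyP => hr; apply: hm hne.
Qed.

Section WsfbElim.
Variables (t : {ffun 'I_n -> 'I_n}) (ht : wsfb t).

Lemma wsfb_not_init q : ~~ is_init (t q).
Proof. by case/and3P: ht => /forallP. Qed.

Lemma wsfb_empty q : is_empty_st q -> t q = q.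
Proof. by case/and3P: ht => _ /forallP /(_ q) /implyP h _ /h /eqP. Qed.

Lemma wsfb_mid z q :
  is_init z -> is_mid q -> ~~ is_empty_st (t z) -> is_empty_st (t q).
Proof.
case/and3P: ht => _ _ /forallP /(_ z) /implyP h /h /orP[-> //|/forallP /(_ q)].
by move=> /implyP hq /hq.
Qed.

End WsfbElim.

Lemma wsfb_tpow_empty t j q :
  wsfb t -> 1 <= j -> is_empty_st (t q) -> is_empty_st (tpow t j q).
Proof.
move=> ht; case: j => // j _ he; rewrite /tpow iterSr.
by elim: j => //= j ih; rewrite wsfb_empty.
Qed.

Lemma WsfP t : reflect (Wsf t) (wsfb t).
Proof.
apply: (iffP idP) => [ht|[[h0 [he _]] hm]]; last first.
  apply: wsfbI => // z q hz hq /negPf hz'.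
  by case: (hm z hz) => [|/(_ q hq)]; rewrite ?hz'.
split; last first.
  move=> z hz; case: (boolP (is_empty_st (t z))) => [|hz']; first by left.
  by right => q hq; apply: wsfb_mid hz'.
split; [exact: wsfb_not_init ht | split; [exact: wsfb_empty ht |]].
move=> j z hj hz; case: (boolP (is_empty_st (tpow t j z))) => [|hzj]; first by left.
have hz' : ~~ is_empty_st (t z).
  by apply: contra hzj; apply: wsfb_tpow_empty.
right=> q hq eq_zq; move: hzj; rewrite eq_zq.
by rewrite (wsfb_tpow_empty ht hj (wsfb_mid ht hz hq hz')).
Qed.

Lemma wsfb_comp t1 t2 : wsfb t1 -> wsfb t2 -> wsfb [ffun q => t2 (t1 q)].
Proof.
move=> h1 h2; apply: wsfbI => [q|q hq|z q hz hq]; rewrite !ffunE.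
- exact: wsfb_not_init.
- by rewrite !wsfb_empty.
move=> hz'; have ht1z : ~~ is_empty_st (t1 z).
  by apply: contra hz' => he; rewrite wsfb_empty.
by have he := wsfb_mid h1 hz hq ht1z; rewrite wsfb_empty.
Qed.

Lemma wsfb_no_colliding (T : {ffun 'I_n -> 'I_n} -> Prop) :
  (forall t, T t -> wsfb t) -> no_colliding T.
Proof.
move=> hT p q [hp hq _ [t [z [r [/hT ht hz hr]]]]].
have no_pair x y : is_mid x -> is_mid y -> t z = x -> t r = y -> False.
  move=> hx hy htz htr; have := wsfb_mid ht hz hr; rewrite htz htr.
  by move=> /(_ (mid_not_empty hx)); apply/negP/mid_not_empty.
by case=> -[htz htr]; [exact: no_pair htz htr | exact: no_pair htz htr].
Qed.

End States.

Section Automaton.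
Variables (n : nat) (Sigma : finType) (delta : Sigma -> {ffun 'I_n -> 'I_n}).

Lemma run_cat q u v : run delta q (u ++ v) = run delta (run delta q u) v.
Proof. exact: foldl_cat. Qed.

Lemma word_transE w q : word_trans delta w q = run delta q w.
Proof. exact: ffunE. Qed.

Lemma word_trans1 a : word_trans delta [:: a] = delta a.
Proof. by apply/ffunP => q; rewrite ffunE. Qed.

Hypothesis delta_wsfb : forall a, wsfb (delta a).

Lemma wsfb_word_trans w : w <> [::] -> wsfb (word_trans delta w).
Proof.
elim: w => // a [_ _|b w IH _]; first by rewrite word_trans1.
have -> : word_trans delta [:: a, b & w] =
          [ffun q => word_trans delta (b :: w) (delta a q)].
  by apply/ffunP => q; rewrite !ffunE.
by apply: wsfb_comp => //; apply: IH.
Qed.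

Lemma trans_sg_wsfb t : trans_sg delta t -> wsfb t.
Proof. by case=> w [/wsfb_word_trans ht ->]. Qed.

Lemma run_empty e w : is_empty_st e -> run delta e w = e.
Proof.
move=> he; case: w => // a w.
by rewrite -word_transE wsfb_empty //; apply: wsfb_word_trans.
Qed.

Variable F : {set 'I_n}.
Hypothesis F_mid : forall q, q \in F -> is_mid q.

Lemma wsfb_last_is_empty : last_is_empty delta F.
Proof.
move=> e he w; rewrite run_empty //; apply/negP => /F_mid.
by rewrite is_midE he andbF.
Qed.

Lemma wsfb_suffix_free : suffix_free delta F.
Proof.
move=> w u [z [hz hwF]] [z' [hz' huF]] [[|a v] hw] //; rewrite hw in hwF.
rewrite (init_eq hz' hz) in huF.
have hu : u <> [::] by move=> hu; move: huF; rewrite hu => /F_mid /mid_not_init; rewrite hz.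
have wsfb_u := wsfb_word_trans hu.
have hzu : ~~ is_empty_st (word_trans delta u z).
  by rewrite word_transE mid_not_empty ?F_mid.
move: hwF; rewrite run_cat -word_transE => /F_mid; set s := run delta z (a :: v).
have hs : ~~ is_init s by rewrite /s -word_transE wsfb_not_init // wsfb_word_trans.
case: (boolP (is_empty_st s)) => [he|hse].
  by rewrite wsfb_empty // is_midE he andbF.
by move=> /mid_not_empty; rewrite (wsfb_mid wsfb_u hz) // is_midE hs.
Qed.

End Automaton.

Section SuffixFreeMinimal.
Variables (n : nat) (Sigma : finType) (delta : Sigma -> {ffun 'I_n -> 'I_n}).
Variable F : {set 'I_n}.
Hypothesis n_gt1 : 1 < n.
Hypothesis HD : sf_min_dfa delta F.

Let z0 : 'I_n := Ordinal (ltnW n_gt1).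
Let e0 : 'I_n := Ordinal (etrans (ltn_predL n) (ltnW n_gt1)).

Lemma sf_run_empty e w : is_empty_st e -> run delta e w = e.
Proof.
case: HD => [[_ hdist] _ hempty] he; apply/eqP/negPn/negP => /eqP hne.
have [x] := hdist _ _ hne.
by rewrite -run_cat !(negbTE (hempty e he _)).
Qed.

Lemma sf_run_live s : ~~ is_empty_st s -> exists x, run delta s x \in F.
Proof.
case: HD => [[_ hdist] _ hempty] hs.
have he0 : is_empty_st e0 by exact: eqxx.
have [x hx] : exists x, (run delta s x \in F) <> (run delta e0 x \in F).
  by apply: hdist; apply: contraNnot hs => ->.
by exists x; move: hx; rewrite (negbTE (hempty e0 he0 x)); case: (_ \in F).
Qed.

Lemma sf_run_reach z q : is_init z -> exists u, run delta z u = q.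
Proof.
case: HD => [[hreach _] _ _] hz; have [z' [u [hz' <-]]] := hreach q.
by exists u; rewrite (init_eq hz hz').
Qed.

Lemma sf_run_not_init w q : w <> [::] -> ~~ is_init (run delta q w).
Proof.
case: HD => [_ hsf _] hw; apply/negP => hi.
have hz0 : is_init z0 by [].
have [u hu] := sf_run_reach q hz0.
have [x hx] : exists x, run delta z0 x \in F.
  by apply: sf_run_live; rewrite /is_empty_st /=; lia.
have acc_x : accepts delta F x by exists z0.
have acc_uwx : accepts delta F ((u ++ w) ++ x).
  by exists z0; rewrite !run_cat hu (init_eq hi hz0).
have hw0 : 0 < size w by case: (w) hw.
have := hsf _ _ acc_uwx acc_x (ex_intro _ (u ++ w) erefl).
by move/(congr1 size); rewrite !size_cat; lia.
Qed.

Lemma sf_run_init_neq w z q : is_init z -> ~~ is_init q ->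
  ~~ is_empty_st (run delta z w) -> run delta z w <> run delta q w.
Proof.
case: HD => [_ hsf _] hz hq hs eq_zq.
have [u hu] := sf_run_reach q hz.
have [x hx] := sf_run_live hs.
have acc_wx : accepts delta F (w ++ x) by exists z; rewrite run_cat.
have acc_uwx : accepts delta F (u ++ (w ++ x)).
  by exists z; rewrite !run_cat hu -eq_zq.
have := hsf _ _ acc_uwx acc_wx (ex_intro _ u erefl).
have hu0 : 0 < size u by case: (u) hu => //= hzq; move: hq; rewrite -hzq hz.
by move/(congr1 size); rewrite !size_cat; lia.
Qed.

Lemma sf_no_colliding_wsfb t :
  no_colliding (trans_sg delta) -> trans_sg delta t -> wsfb t.
Proof.
move=> hnc ht; have [w [hw ->]] := ht.
apply: wsfbI => [q|q hq|z q hz hq]; rewrite !word_transE.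
- exact: sf_run_not_init.
- exact: sf_run_empty.
move=> hzw; apply/negPn/negP => hqw; apply: (hnc (run delta z w) (run delta q w)).
split; rewrite ?is_midE ?sf_run_not_init ?hzw ?hqw //.
  by apply: sf_run_init_neq; rewrite ?mid_not_init.
exists (word_trans delta w), z, q; rewrite !word_transE.
by split=> //; [exists w | left].
Qed.

End SuffixFreeMinimal.

Section WsfAutomaton.
Variable m : nat.
Hypothesis m_gt1 : 1 < m.
Notation Q := 'I_m.+1.
Notation letter := {t : {ffun Q -> Q} | wsfb t}.

Lemma is_initE (q : Q) : is_init q = (q == ord0).
Proof. by apply/eqP/eqP => [h|-> //]; apply: val_inj. Qed.

Lemma is_empty_stE (q : Q) : is_empty_st q = (q == ord_max).
Proof. by apply/eqP/eqP => [h|-> //]; apply: val_inj. Qed.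

Lemma ord_max_not_init : ~~ is_init (ord_max : Q).
Proof. by rewrite /is_init /=; lia. Qed.

Lemma one_mid : is_mid (inord 1 : Q).
Proof. by rewrite /is_mid /= inordK; lia. Qed.

Definition single_trans (x y : Q) : {ffun Q -> Q} :=
  [ffun q => if q == x then y else ord_max].

Lemma wsfb_single_trans x y :
  ~~ is_init y -> x != ord_max -> wsfb (single_trans x y).
Proof.
move=> hy hx; apply: wsfbI => [q|q|z q hz hq]; rewrite !ffunE.
- by case: ifP => _; rewrite // ord_max_not_init.
- by rewrite is_empty_stE => /eqP ->; rewrite eq_sym (negbTE hx).
case: ifP => [/eqP <-|]; last by rewrite is_empty_stE eqxx.
case: ifP => [/eqP eq_qz|_ _]; last by rewrite is_empty_stE.
by move: hq; rewrite eq_qz is_midE hz.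
Qed.

Lemma run_single_trans (x y : Q) (ht : wsfb (single_trans x y)) q :
  run (val : letter -> _) q [:: (Sub _ ht : letter)] = if q == x then y else ord_max.
Proof. by rewrite /run /= ffunE. Qed.

Lemma wsf_minimal_dfa : minimal_dfa (val : letter -> _) [set inord 1].
Proof.
split=> [q|p q hpq].
  case: (boolP (is_init q)) => [hq|hq]; first by exists q, [::].
  have ht : wsfb (single_trans ord0 q).
    by apply: wsfb_single_trans; rewrite // eq_sym -is_initE ord_max_not_init.
  by exists ord0, [:: (Sub _ ht : letter)]; rewrite run_single_trans eqxx.
wlog hp : p q hpq / p != ord_max.
  move=> wlog; case: (boolP (p == ord_max)) => [/eqP hp|]; last exact: wlog.
  have [|w hw] := wlog q p (nesym hpq); first by rewrite -hp eq_sym; apply/eqP.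
  by exists w; apply: nesym.
have ht := wsfb_single_trans (mid_not_init one_mid) hp.
exists [:: (Sub _ ht : letter)]; rewrite !run_single_trans eqxx.
have /negPf -> : q != p by apply/eqP; apply: nesym.
by rewrite !in_set1 eqxx eq_sym -is_empty_stE (negbTE (mid_not_empty one_mid)).
Qed.

Lemma wsf_automaton :
  [/\ sf_min_dfa (val : letter -> _) [set inord 1],
      forall t, trans_sg (val : letter -> _) t <-> Wsf t &
      no_colliding (trans_sg (val : letter -> _))].
Proof.
have delta_wsfb (a : letter) : wsfb (val a) by case: a.
have F_mid (q : Q) : q \in [set inord 1] -> is_mid q.
  by rewrite in_set1 => /eqP ->; apply: one_mid.
split.
- split; [exact: wsf_minimal_dfa | exact: wsfb_suffix_free | exact: wsfb_last_is_empty].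
- move=> t; split=> [/(trans_sg_wsfb delta_wsfb)/WsfP //|/WsfP ht].
  by exists [:: (Sub t ht : letter)]; rewrite word_trans1.
- exact/wsfb_no_colliding/trans_sg_wsfb.
Qed.

End WsfAutomaton.

Theorem proposition3 (n : nat) (Hn : 4 <= n) :
  (exists (Sigma : finType) (delta : Sigma -> {ffun 'I_n -> 'I_n}) (F : {set 'I_n}),
     [/\ sf_min_dfa delta F,
         (forall t, trans_sg delta t <-> Wsf t) &
         no_colliding (trans_sg delta)]) /\
  (forall (Sigma : finType) (delta : Sigma -> {ffun 'I_n -> 'I_n}) (F : {set 'I_n}),
     sf_min_dfa delta F -> no_colliding (trans_sg delta) ->
     forall t, trans_sg delta t -> Wsf t).
Proof.
split=> [|Sigma delta F HD hnc t ht]; last first.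
  by apply/WsfP; apply: (sf_no_colliding_wsfb _ HD) => //; lia.
case: n Hn => // m Hm.
exists {t : {ffun 'I_m.+1 -> 'I_m.+1} | wsfb t}, val, [set inord 1].
by apply: wsf_automaton; lia.
Qed.
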